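(* Consider the DSA algorithm and its primal–dual variables $\mathbf{x}^t\in\mathbb{R}^{Np}$, $\mathbf{v}^t\in\mathbb{R}^{Np}$ as described in the context, and let $\mathbf{U}:=(\tilde{\mathbf{Z}}-\mathbf{Z})^{1/2}$ (positive semidefinite). Suppose the weight matrices $\mathbf{W},\tilde{\mathbf{W}}$ satisfy conditions (a)–(c) of the context. Then for every $t\ge 0$, $$\alpha\left[\hat{\mathbf{g}}^{t}-\nabla f(\mathbf{x}^* )\right]=(\mathbf{I}+\mathbf{Z}-2\tilde{\mathbf{Z}})(\mathbf{x}^*-\mathbf{x}^{t+1})+\tilde{\mathbf{Z}}(\mathbf{x}^{t}-\mathbf{x}^{t+1})-\mathbf{U}(\mathbf{v}^{t+1}-\mathbf{v}^* ).$$
   Context: Problem: a connected network of $N$ nodes; node $n$ holds $q_n$ differentiable functions $f_{n,i}:\mathbb{R}^p\to\mathbb{R}$, $i=1,\dots,q_n$, and $f_n:=\frac1{q_n}\sum_{i=1}^{q_n}f_{n,i}$. The goal is $\tilde{\mathbf{x}}^*:=\arg\min_{\mathbf{x}}\sum_{n=1}^N f_n(\mathbf{x})$ (assumed to exist). For $\mathbf{x}=[\mathbf{x}_1;\dots;\mathbf{x}_N]\in\mathbb{R}^{Np}$ set $f(\mathbf{x}):=\sum_n f_n(\mathbf{x}_n)$, so $\nabla f(\mathbf{x})=[\nabla f_1(\mathbf{x}_1);\dots;\nabla f_N(\mathbf{x}_N)]$, and $\mathbf{x}^*:=[\tilde{\mathbf{x}}^*;\dots;\tilde{\mathbf{x}}^*]$.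 Weights: symmetric matrices $\mathbf{W}=(w_{nm}),\tilde{\mathbf{W}}=(\tilde w_{nm})\in\mathbb{R}^{N\times N}$ whose entries are nonzero only if $m=n$ or $m$ is a neighbor of $n$, satisfying: (a) $\mathbf{W}=\mathbf{W}^T$, $\tilde{\mathbf{W}}=\tilde{\mathbf{W}}^T$; (b) $\mathrm{null}(\mathbf{I}-\tilde{\mathbf{W}})\supseteq\mathrm{span}(\mathbf{1})$, $\mathrm{null}(\mathbf{I}-\mathbf{W})=\mathrm{span}(\mathbf{1})$, $\mathrm{null}(\tilde{\mathbf{W}}-\mathbf{W})=\mathrm{span}(\mathbf{1})$; (c) $\mathbf{W}\preceq\tilde{\mathbf{W}}\preceq(\mathbf{I}+\mathbf{W})/2$ and $\tilde{\mathbf{W}}\succ 0$. Let $\mathbf{Z}:=\mathbf{W}\otimes\mathbf{I}_p$, $\tilde{\mathbf{Z}}:=\tilde{\mathbf{W}}\otimes\mathbf{I}_p$, $\mathbf{U}:=(\tilde{\mathbf{Z}}-\mathbf{Z})^{1/2}$. DSA: given stepsize $\alpha>0$ and initial $\mathbf{x}_n^0$, set $\mathbf{y}_{n,i}^0=\mathbf{x}_n^0$. At each $t\ge0$ each node $n$ draws $i_n^t$ uniformly from $\{1,\dots,q_n\}$, independently of the past, forms $\hat{\mathbf{g}}_n^t:=\nabla f_{n,i_n^t}(\mathbf{x}_n^t)-\nabla f_{n,i_n^t}(\mathbf{y}_{n,i_n^t}^t)+\frac1{q_n}\sum_{i=1}^{q_n}\nabla f_{n,i}(\mathbf{y}_{n,i}^t)$,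 and sets $\mathbf{y}_{n,i}^{t+1}=\mathbf{x}_n^t$ if $i=i_n^t$, $\mathbf{y}_{n,i}^{t+1}=\mathbf{y}_{n,i}^t$ otherwise. With $\hat{\mathbf{g}}^t:=[\hat{\mathbf{g}}_1^t;\dots;\hat{\mathbf{g}}_N^t]$: $\mathbf{x}^1=\mathbf{Z}\mathbf{x}^0-\alpha\hat{\mathbf{g}}^0$ and $\mathbf{x}^{t+1}=(\mathbf{I}+\mathbf{Z})\mathbf{x}^t-\tilde{\mathbf{Z}}\mathbf{x}^{t-1}-\alpha[\hat{\mathbf{g}}^t-\hat{\mathbf{g}}^{t-1}]$ for $t\ge1$. Dual variables: $\mathbf{v}^t:=\sum_{s=0}^t\mathbf{U}\mathbf{x}^s$; equivalently $\mathbf{v}^0=\mathbf{U}\mathbf{x}^0$, $\mathbf{x}^{t+1}=\mathbf{x}^t-\alpha\hat{\mathbf{g}}^t-(\mathbf{I}-\tilde{\mathbf{Z}})\mathbf{x}^t-\mathbf{U}\mathbf{v}^t$, $\mathbf{v}^{t+1}=\mathbf{v}^t+\mathbf{U}\mathbf{x}^{t+1}$. The optimal dual variable $\mathbf{v}^*$ is the vector in the column space of $\mathbf{U}$ with $\alpha\nabla f(\mathbf{x}^* )+\mathbf{U}\mathbf{v}^*=\mathbf{0}$. *)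

From mathcomp Require Import all_boot all_order all_algebra.
From mathcomp Require Import all_classical all_reals all_analysis.
From mathcomp Require Import matrix_topology matrix_normedtype.
Import GRing.Theory Num.Theory.
Import numFieldNormedType.Exports.

Set Implicit Arguments.
Unset Strict Implicit.
Unset Printing Implicit Defensive.

Local Open Scope ring_scope.

(* Index bookkeeping for stacked vectors in R^(m*n):
   index k of 'I_(m*n) corresponds to the pair (i, j) with k = mxvec_index i j
   (row-major: block i, coordinate j).  [idx] is the inverse of mxvec_index. *)
Definition idx (m n : nat) (k : 'I_(m * n)) : 'I_m * 'I_n :=
  enum_val (cast_ord (esym (mxvec_cast m n)) k).

Definition kron (R : pzRingType) (m1 n1 m2 n2 : nat)
  (A : 'M[R]_(m1, n1)) (B : 'M[R]_(m2, n2)) : 'M[R]_(m1 * m2, n1 * n2) :=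
  \matrix_(k, l) (A (idx k).1 (idx l).1 * B (idx k).2 (idx l).2).

Definition blk (R : Type) (N p : nat) (x : 'cV[R]_(N * p)) (n : 'I_N) : 'cV[R]_p :=
  \col_j x (mxvec_index n j) 0.

Definition stack (R : Type) (N p : nat) (g : 'I_N -> 'cV[R]_p) : 'cV[R]_(N * p) :=
  \col_k g (idx k).1 (idx k).2 0.

Definition grad (R : realType) (p : nat) (f : 'cV[R]_p -> R) (x : 'cV[R]_p)
  : 'cV[R]_p :=
  \col_k ('d f x (delta_mx k 0 : 'cV[R]_p)).

Definition psd (R : realType) (n : nat) (A : 'M[R]_n) : Prop :=
  forall v : 'cV[R]_n, 0 <= (v^T *m A *m v) 0 0.
Definition pd (R : realType) (n : nat) (A : 'M[R]_n) : Prop :=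
  forall v : 'cV[R]_n, v != 0 -> 0 < (v^T *m A *m v) 0 0.

Definition connected_graph (N : nat) (adj : rel 'I_N) : Prop :=
  [/\ symmetric adj, irreflexive adj & forall a b : 'I_N, connect adj a b].

Definition weight_conditions (R : realType) (N : nat) (adj : rel 'I_N)
  (W Wt : 'M[R]_N) : Prop :=
  let one := (const_mx 1 : 'cV[R]_N) in
  [/\
      (forall n m : 'I_N, n != m -> ~~ adj n m -> W n m = 0 /\ Wt n m = 0),
      W^T = W /\ Wt^T = Wt,
      [/\ (forall c : R, (1%:M - Wt) *m (c *: one) = 0),
          (forall v : 'cV[R]_N, (1%:M - W) *m v = 0 <-> exists c : R, v = c *: one)
        & (forall v : 'cV[R]_N, (Wt - W) *m v = 0 <-> exists c : R, v = c *: one)]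
    &
      [/\ psd (Wt - W), psd ((2%:R)^-1 *: (1%:M + W) - Wt) & pd Wt]].

Definition fn (R : realType) (N p : nat) (q : 'I_N -> nat)
  (F : forall n : 'I_N, 'I_(q n) -> 'cV[R]_p -> R) (n : 'I_N) (z : 'cV[R]_p) : R :=
  (q n)%:R^-1 * \sum_(i < q n) F n i z.

Definition gradf (R : realType) (N p : nat) (q : 'I_N -> nat)
  (F : forall n : 'I_N, 'I_(q n) -> 'cV[R]_p -> R) (x : 'cV[R]_(N * p))
  : 'cV[R]_(N * p) :=
  stack (fun n => grad (fn F n) (blk x n)).

Definition ghat (R : realType) (N p : nat) (q : 'I_N -> nat)
  (F : forall n : 'I_N, 'I_(q n) -> 'cV[R]_p -> R)
  (I : nat -> forall n : 'I_N, 'I_(q n))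
  (x : nat -> 'cV[R]_(N * p))
  (y : nat -> forall n : 'I_N, 'I_(q n) -> 'cV[R]_p) (t : nat) : 'cV[R]_(N * p) :=
  stack (fun n =>
    grad (F n (I t n)) (blk (x t) n) - grad (F n (I t n)) (y t n (I t n))
    + (q n)%:R^-1 *: \sum_(i < q n) grad (F n i) (y t n i)).

Definition DSA_run (R : realType) (N p : nat) (alpha : R) (W Wt : 'M[R]_N)
  (q : 'I_N -> nat) (F : forall n : 'I_N, 'I_(q n) -> 'cV[R]_p -> R)
  (I : nat -> forall n : 'I_N, 'I_(q n))
  (x : nat -> 'cV[R]_(N * p))
  (y : nat -> forall n : 'I_N, 'I_(q n) -> 'cV[R]_p) : Prop :=
  let Z := kron W (1%:M : 'M[R]_p) in
  let Zt := kron Wt (1%:M : 'M[R]_p) in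
  let g := ghat F I x y in
  [/\ (forall n i, y 0%N n i = blk (x 0%N) n),
      (forall t n i, y t.+1 n i = if i == I t n then blk (x t) n else y t n i),
      x 1%N = Z *m x 0%N - alpha *: g 0%N
    & (forall t, x t.+2 = (1%:M + Z) *m x t.+1 - Zt *m x t
                           - alpha *: (g t.+1 - g t))].

Definition dualv (R : realType) (Np : nat) (U : 'M[R]_Np)
  (x : nat -> 'cV[R]_Np) (t : nat) : 'cV[R]_Np :=
  \sum_(s < t.+1) U *m x s.

(** Telescoping the two-step DSA recursion gives the primal-dual form
    [x^{s+1} = Zt x^s - alpha g^s - U v^s], because [U v^{s+1} - U v^s = (Zt - Z) x^{s+1}]
    by [U^2 = Zt - Z]. At the optimum, [alpha grad f(x^* ) = - U v^*], and [x^*] is a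
    consensus vector, on which [Z] and [Zt] act as the identity since the rows of [W] and
    [Wt] sum to one; hence [(I + Z - 2 Zt) x^* = 0]. *)
From mathcomp Require Import all_boot all_order all_algebra.
From mathcomp Require Import all_classical all_reals all_analysis.
From mathcomp Require Import matrix_topology matrix_normedtype.
From mathcomp Require Import ring.
Import GRing.Theory.
Import numFieldNormedType.Exports.
Local Open Scope ring_scope.

Lemma idx_mxvec_index (m n : nat) (i : 'I_m) (j : 'I_n) :
  idx (mxvec_index i j) = (i, j).
Proof. by rewrite /idx /mxvec_index cast_ordK enum_rankK. Qed.

Lemma mulmx_kron1_stack (R : pzRingType) (N p : nat) (A : 'M[R]_N)
    (g : 'I_N -> 'cV[R]_p) :
  kron A (1%:M : 'M[R]_p) *m stack g = stack (fun n => \sum_m A n m *: g m).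
Proof.
apply/matrixP => k j; rewrite ord1 !mxE summxE.
rewrite (reindex (fun u : 'I_N * 'I_p => mxvec_index u.1 u.2)) /=; last first.
  exists (fun l => idx l) => [u _|l _]; first by rewrite idx_mxvec_index; case: u.
  by rewrite /idx /mxvec_index -surjective_pairing enum_valK cast_ordKV.
rewrite -(pair_bigA _ (fun i j => kron A 1%:M k (mxvec_index i j)
                                  * stack g (mxvec_index i j) 0)) /=.
apply: eq_bigr => i _; rewrite (bigD1 (idx k).2) //= big1 ?addr0.
  by rewrite !mxE idx_mxvec_index /= eqxx mulr1.
move=> j' /negbTE nj; rewrite !mxE idx_mxvec_index /= eq_sym nj.
by rewrite mulr0 mul0r.
Qed.

Lemma mulmx_kron1_stack_cst (R : pzRingType) (N p : nat) (A : 'M[R]_N)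
    (z : 'cV[R]_p) :
  A *m (const_mx 1 : 'cV[R]_N) = const_mx 1 ->
  kron A (1%:M : 'M[R]_p) *m stack (fun _ => z) = stack (fun _ => z).
Proof.
move=> /matrixP rowsum1; rewrite mulmx_kron1_stack.
apply/matrixP => k j; rewrite !mxE -scaler_suml mxE.
have := rowsum1 (idx k).1 0; rewrite !mxE => rowsum.
rewrite -[in RHS](mul1r (z _ _)) -rowsum; congr (_ * _).
by apply: eq_bigr => m _; rewrite mxE mulr1.
Qed.

Section PrimalDual.
Context {R : realType} {n : nat} {Z Zt U : 'M[R]_n} {alpha : R}.
Context {x g : nat -> 'cV[R]_n}.
Hypothesis U2 : U *m U = Zt - Z.
Hypothesis x1 : x 1%N = Z *m x 0%N - alpha *: g 0%N.
Hypothesis xSS : forall t, x t.+2 = (1%:M + Z) *m x t.+1 - Zt *m x t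
                                    - alpha *: (g t.+1 - g t).

Let v := dualv U x.

Lemma mulmx_dualvS s : U *m v s.+1 = U *m v s + (Zt - Z) *m x s.+1.
Proof. by rewrite /v /dualv big_ord_recr /= mulmxDr mulmxA U2. Qed.

Lemma primal_dual_recursion s : x s.+1 = Zt *m x s - alpha *: g s - U *m v s.
Proof.
elim: s => [|s IH].
  rewrite x1 /v /dualv big_ord1 mulmxA U2 mulmxBl.
  by apply/matrixP => i j; rewrite !mxE; ring.
have Ztx : Zt *m x s = x s.+1 + alpha *: g s + U *m v s.
  by rewrite IH addrAC !subrK.
rewrite xSS Ztx mulmx_dualvS mulmxDl mulmxBl mul1mx.
by apply/matrixP => i j; rewrite !mxE; ring.
Qed.

Lemma optimality_residual (xs vs gs : 'cV[R]_n) t :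
  (1%:M + Z - 2%:R *: Zt) *m xs = 0 -> alpha *: gs + U *m vs = 0 ->
  alpha *: (g t - gs)
  = (1%:M + Z - 2%:R *: Zt) *m (xs - x t.+1) + Zt *m (x t - x t.+1)
    - U *m (v t.+1 - vs).
Proof.
move=> consensus optimal; rewrite scalerBr.
have -> : alpha *: gs = - (U *m vs) by apply/eqP; rewrite -addr_eq0 optimal.
have -> : alpha *: g t = Zt *m x t - x t.+1 - U *m v t.
  by rewrite [x t.+1]primal_dual_recursion; apply/matrixP => i j; rewrite !mxE; ring.
rewrite !mulmxBr consensus mulmx_dualvS !mulmxBl !mulmxDl mul1mx.
rewrite -scalemxAl; apply/matrixP => i j; rewrite !mxE; ring.
Qed.

End PrimalDual.

Theorem lemma2 (R : realType) (N p : nat) (adj : rel 'I_N) (W Wt : 'M[R]_N)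
  (q : 'I_N -> nat) (F : forall n : 'I_N, 'I_(q n) -> 'cV[R]_p -> R)
  (alpha : R) (I : nat -> forall n : 'I_N, 'I_(q n))
  (x : nat -> 'cV[R]_(N * p))
  (y : nat -> forall n : 'I_N, 'I_(q n) -> 'cV[R]_p)
  (U : 'M[R]_(N * p)) (xt : 'cV[R]_p) (vs : 'cV[R]_(N * p)) :
  connected_graph adj ->
  weight_conditions adj W Wt ->
  (forall n, (0 < q n)%N) ->
  (forall n i (z : 'cV[R]_p), differentiable (F n i) z) ->
  (forall z : 'cV[R]_p, \sum_(n < N) fn F n xt <= \sum_(n < N) fn F n z) ->
  0 < alpha ->
  DSA_run alpha W Wt F I x y ->
  (* U = (Zt - Z)^(1/2): the symmetric positive semidefinite square root *)
  U^T = U -> psd U ->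
  U *m U = kron Wt (1%:M : 'M[R]_p) - kron W (1%:M : 'M[R]_p) ->
  (* optimal dual variable v* *)
  (exists w : 'cV[R]_(N * p), vs = U *m w) ->
  alpha *: gradf F (stack (fun _ => xt)) + U *m vs = 0 ->
  forall t : nat,
    alpha *: (ghat F I x y t - gradf F (stack (fun _ => xt)))
    = (1%:M + kron W (1%:M : 'M[R]_p) - 2%:R *: kron Wt (1%:M : 'M[R]_p))
        *m (stack (fun _ => xt) - x t.+1)
      + kron Wt (1%:M : 'M[R]_p) *m (x t - x t.+1)
      - U *m (dualv U x t.+1 - vs).
Proof.
move=> _ [_ _ [Wt_cst _ W_Wt_cst] _] _ _ _ _ [_ _ x1 xSS] _ _ U2 _ optimal t.
have Wt1 : Wt *m (const_mx 1 : 'cV[R]_N) = const_mx 1.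
  move: (Wt_cst 1); rewrite scale1r mulmxBl mul1mx => /eqP.
  by rewrite subr_eq0 eq_sym => /eqP.
have W1 : W *m (const_mx 1 : 'cV[R]_N) = const_mx 1.
  have /eqP : (Wt - W) *m (const_mx 1 : 'cV[R]_N) = 0.
    by apply/W_Wt_cst; exists 1; rewrite scale1r.
  by rewrite mulmxBl Wt1 subr_eq0 eq_sym => /eqP.
have consensus : (1%:M + kron W 1%:M - 2%:R *: kron Wt 1%:M)
                   *m stack (fun _ => xt) = 0.
  rewrite mulmxBl mulmxDl mul1mx -scalemxAl !mulmx_kron1_stack_cst //.
  by rewrite scaler_nat mulr2n subrr.
exact: optimality_residual U2 x1 xSS _ _ _ t consensus optimal.
Qed.
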